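(* There is a constant $C$, depending only on $h$ and $b_1,\dots,b_h$, with the following property. Let $A\subseteq\mathbb{Z}_{\ge0}$, $0<\delta<1$, $2\le\ell\le h$ and $n\ge0$. Let $\mathrm{R}$ be any one of $r,\ r^*,\ \rho,\ \rho^{(\delta\text{-small})}$. Then \[ \mathrm{R}_{A,\ell}(n)\le C\,\widehat{\mathrm{R}}_{A,\ell}(n)\prod_{j=2}^{\ell-1}\Big(\max_{0\le k\le n}\widehat{r}^{\,*}_{A,j}(k)\Big), \] where the empty product (for $\ell=2$) equals $1$.
   Context: Fix an integer $h\ge 2$ and positive integers $b_1,\dots,b_h$, not necessarily distinct, with $\gcd(b_1,\dots,b_h)=1$. Let $A\subseteq\mathbb{Z}_{\ge0}$, $1\le\ell\le h$ and $n\ge0$ be an integer. Representation functions: - $r_{A,\ell}(n)$ counts the tuples $(k_1,\dots,k_\ell)\in A^\ell$ with $b_1k_1+\cdots+b_\ell k_\ell=n$. - $\rho_{A,\ell}(n)$ counts those tuples in which the $k_i$ are pairwise distinct (''exact'' solutions). - For $0<\delta<1$, $\rho^{(\delta\text{-small})}_{A,\ell}(n)$ counts exact solutions with $k_j<n^\delta$ for some $j$. - $r^*_{A,\ell}(n)$ is the maximum, over index choices $1\le i_1<\cdots<i_\ell\le h$, of the number of $(k_1,\dots,k_\ell)\in A^\ell$ with $b_{i_1}k_1+\cdots+b_{i_\ell}k_\ell=n$. Disjoint families: the support of a solution tuple is the set $\{k_1,\dots,k_\ell\}$. A family of solutions is disjoint if their supports are pairwise disjoint. For each of the counting functions $\mathrm{R}$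 above, $\widehat{\mathrm{R}}_{A,\ell}(n)$ denotes the maximum cardinality of a disjoint family of solutions among those counted by $\mathrm{R}_{A,\ell}(n)$. For the starred function, $\widehat{r}^{\,*}_{A,\ell}(n)$ is the maximum over index choices $i_1<\cdots<i_\ell$ of the maximum cardinality of a disjoint family of solutions in $A^\ell$ of $b_{i_1}k_1+\cdots+b_{i_\ell}k_\ell=n$. *)

From mathcomp Require Import all_boot all_order all_algebra.
From mathcomp Require Import reals exp.
Set Implicit Arguments. Unset Strict Implicit. Unset Printing Implicit Defensive.
Import Order.TTheory GRing.Theory Num.Theory.

(* Indexing convention: b_1,...,b_h of the paper are b 0, ..., b (h-1).
   A solution tuple (k_1,...,k_l) is a finite function 'I_l -> 'I_n.+1
   (every k_i in a solution of c_1 k_1 + ... + c_l k_l = n with all c_i >= 1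
   satisfies k_i <= n, so nothing is lost). *)

Definition tup (l n : nat) := {ffun 'I_l -> 'I_n.+1}.

Definition sols (A : pred nat) (l : nat) (c : 'I_l -> nat) (n : nat) : {set tup l n} :=
  [set k : tup l n | [forall i, A (k i)] && ((\sum_(i < l) c i * k i)%N == n)].

Definition exact_sols (A : pred nat) (l : nat) (c : 'I_l -> nat) (n : nat) : {set tup l n} :=
  [set k in sols A c n | injectiveb k].

Definition small_sols (R : realType) (delta : R) (A : pred nat) (l : nat)
    (c : 'I_l -> nat) (n : nat) : {set tup l n} :=
  [set k in exact_sols A c n | [exists j, ((k j)%:R < powR (n%:R) delta)%R]].

Definition supp (l n : nat) (k : tup l n) : {set 'I_n.+1} := [set k i | i in 'I_l].

Definition disjoint_fam (l n : nat) (F : {set tup l n}) : bool :=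
  [forall k1 in F, forall k2 in F, (k1 != k2) ==> [disjoint supp k1 & supp k2]].

Definition hat (l n : nat) (S : {set tup l n}) : nat :=
  \max_(F : {set tup l n} | (F \subset S) && disjoint_fam F) #|F|.

Definition incr_choice (l h : nat) (s : {ffun 'I_l -> 'I_h}) : bool :=
  [forall i : 'I_l, forall j : 'I_l, (i < j)%N ==> (s i < s j)%N].

Definition r_fun (b : nat -> nat) (A : pred nat) (l n : nat) : nat :=
  #|sols A (fun i : 'I_l => b i) n|.
Definition r_hat (b : nat -> nat) (A : pred nat) (l n : nat) : nat :=
  hat (sols A (fun i : 'I_l => b i) n).

Definition rho_fun (b : nat -> nat) (A : pred nat) (l n : nat) : nat :=
  #|exact_sols A (fun i : 'I_l => b i) n|.
Definition rho_hat (b : nat -> nat) (A : pred nat) (l n : nat) : nat :=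
  hat (exact_sols A (fun i : 'I_l => b i) n).

Definition rho_small (R : realType) (delta : R) (b : nat -> nat) (A : pred nat)
    (l n : nat) : nat :=
  #|small_sols delta A (fun i : 'I_l => b i) n|.
Definition rho_small_hat (R : realType) (delta : R) (b : nat -> nat) (A : pred nat)
    (l n : nat) : nat :=
  hat (small_sols delta A (fun i : 'I_l => b i) n).

Definition rstar (h : nat) (b : nat -> nat) (A : pred nat) (l n : nat) : nat :=
  \max_(s : {ffun 'I_l -> 'I_h} | incr_choice s) #|sols A (fun i => b (s i)) n|.
Definition rstar_hat (h : nat) (b : nat -> nat) (A : pred nat) (l n : nat) : nat :=
  \max_(s : {ffun 'I_l -> 'I_h} | incr_choice s) hat (sols A (fun i => b (s i)) n).

Definition prod_factor (h : nat) (b : nat -> nat) (A : pred nat) (l n : nat) : nat :=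
  \prod_(2 <= j < l) \max_(k < n.+1) rstar_hat h b A j k.

From mathcomp Require Import all_boot all_order all_algebra.
From mathcomp Require Import reals exp zify.
Set Implicit Arguments. Unset Strict Implicit. Unset Printing Implicit Defensive.

(* Let F be a largest disjoint family in a set S of solutions and U the union of
   the supports of F, so #|U| <= l * hat S.  By maximality every solution in S
   meets U, i.e. has a coordinate k_i = x with x in U.  Fixing k_i = x leaves an
   equation in l - 1 unknowns whose coefficients are again an increasing choice
   of the b_j; by induction on l it has at most
   h^(2(l-1)) * max_k rhat^*_(l-1)(k) * prod_(j=2)^(l-2) max_k rhat^*_j(k)
   solutions (the hat of the full solution set is bounded by that maximum,
   which is where the new factor of the product comes from).  Summing over the
   l * #|U| <= l^2 * hat S pairs (i, x) gives the bound with C = h^(2h) for every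
   subset S of the solutions, hence for r, r^*, rho and rho^(delta-small). *)

Lemma card_bigcup_le (I T : finType) (P : pred I) (A : I -> {set T}) :
  #|\bigcup_(i | P i) A i| <= \sum_(i | P i) #|A i|.
Proof.
apply: (big_ind2 (fun (X : {set T}) n => #|X| <= n)) => [|X1 n1 X2 n2 le1 le2|//].
  by rewrite cards0.
exact: leq_trans (leq_card_setU X1 X2).1 (leq_add le1 le2).
Qed.

Section DisjointFamilies.
Variables (l n : nat).
Implicit Types (S F : {set tup l n}) (t : tup l n).

Lemma hat_attained S :
  {F : {set tup l n} | (F \subset S) && disjoint_fam F & hat S = #|F|}.
Proof.
rewrite /hat; have [|F HF ->] := @eq_bigmax_cond _
  (fun F : {set tup l n} => (F \subset S) && disjoint_fam F) (fun F => #|F|).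
  apply/card_gt0P; exists set0; rewrite unfold_in /= sub0set /=.
  by apply/forall_inP => k1; rewrite inE.
by exists F.
Qed.

Lemma leq_card_hat S F : F \subset S -> disjoint_fam F -> #|F| <= hat S.
Proof. by move=> FS Fd; apply: (leq_bigmax_cond F); rewrite FS. Qed.

Lemma disjoint_famU1 F t :
  disjoint_fam F -> [disjoint supp t & \bigcup_(f in F) supp f] ->
  disjoint_fam (t |: F).
Proof.
move=> /forall_inP Fd dis.
have suppF f : f \in F -> supp f \subset \bigcup_(g in F) supp g.
  by move=> fF; apply/subsetP => y yf; apply/bigcupP; exists f.
apply/forall_inP => k1 /setU1P[->|k1F]; apply/forall_inP => k2 /setU1P[->|k2F];
  apply/implyP => ne.
- by rewrite eqxx in ne.
- exact: disjointWr (suppF k2 k2F) dis.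
- by rewrite disjoint_sym; apply: disjointWr (suppF k1 k1F) dis.
- by move/forall_inP: (Fd k1 k1F) => /(_ k2 k2F) /implyP; apply.
Qed.

End DisjointFamilies.

Lemma hat_cover l n (S : {set tup l.+1 n}) :
  exists2 U : {set 'I_n.+1}, #|U| <= l.+1 * hat S &
    forall t, t \in S -> exists i, t i \in U.
Proof.
have [F /andP[FS Fd] hatF] := hat_attained S.
exists (\bigcup_(f in F) supp f).
  apply: leq_trans (card_bigcup_le _ _) _.
  rewrite hatF mulnC -sum_nat_const; apply: leq_sum => f _.
  by apply: leq_trans (leq_imset_card _ _) _; rewrite card_ord.
move=> t tS; case: (boolP (supp t :&: \bigcup_(f in F) supp f == set0)); last first.
  by case/set0Pn=> y; rewrite inE => /andP[/imsetP[i _ ->] yU]; exists i.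
rewrite setI_eq0 => dis; exfalso.
have t0 : t ord0 \in supp t by apply/imsetP; exists ord0.
have tF : t \notin F.
  apply/negP => tF; move: (disjointFr dis t0).
  by move/bigcupP; apply; exists t.
have := @leq_card_hat _ _ S (t |: F).
rewrite subUset sub1set tS FS disjoint_famU1 // => /(_ isT isT).
by rewrite cardsU1 tF hatF ltnn.
Qed.

Lemma card_le_hat_fibres l n (S : {set tup l.+1 n}) (B : nat) :
  (forall i x, #|[set t in S | t i == x]| <= B) ->
  #|S| <= l.+1 * hat S * (l.+1 * B).
Proof.
move=> fibreB; have [U cardU coverU] := hat_cover S.
have cover : S \subset \bigcup_(x in U) \bigcup_(i < l.+1) [set t in S | t i == x].
  apply/subsetP => t tS; have [i tiU] := coverU t tS.
  apply/bigcupP; exists (t i) => //; apply/bigcupP; exists i => //.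
  by rewrite inE tS eqxx.
apply: leq_trans (subset_leq_card cover) _.
apply: leq_trans (card_bigcup_le _ _) _.
apply: leq_trans (_ : \sum_(x in U) (l.+1 * B) <= _); last first.
  by rewrite sum_nat_const leq_mul.
apply: leq_sum => x _; apply: leq_trans (card_bigcup_le _ _) _.
by rewrite -[l.+1 in X in _ <= X]card_ord -sum_nat_const leq_sum.
Qed.

(* Since every c_j >= 1, the other unknowns of a solution with k_i = x are at
   most n - c_i x, so they form a tuple of type tup l (n - c_i x). *)
Lemma card_sols_fibre_le l n (A : pred nat) (c : 'I_l.+1 -> nat) i x :
  (forall j, 0 < c j) ->
  #|[set t in sols A c n | t i == x]| <=
  #|sols A (fun j : 'I_l => c (lift i j)) (n - c i * x)|.
Proof.
move=> cpos; set m := n - c i * x; set X := [set t in sols A c n | t i == x].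
have restr t : t \in X ->
    \sum_(j < l) c (lift i j) * t (lift i j) = m /\ forall j, t (lift i j) <= m.
  rewrite !inE => /andP[/andP[_ /eqP sum_t] /eqP ti].
  have sum_rest : \sum_(j < l) c (lift i j) * t (lift i j) = m.
    move: sum_t; rewrite /m -ti (bigD1_ord i (P := predT)) //=.
    move: (\sum_(j < l) _) => s; lia.
  split=> // j; rewrite -sum_rest (bigD1 j) //=.
  exact: leq_trans (leq_pmull _ (cpos _)) (leq_addr _ _).
pose f (t : tup l.+1 n) := [ffun j : 'I_l => (inord (t (lift i j)) : 'I_m.+1)].
have fE t : t \in X -> forall j, (f t j : nat) = t (lift i j).
  by move=> tX j; rewrite ffunE inordK // ltnS; case: (restr t tX) => _ ->.
rewrite -(card_in_imset (f := f)).
  apply/subset_leq_card/subsetP => _ /imsetP[t tX ->].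
  rewrite inE; apply/andP; split.
    apply/forallP => j; rewrite fE //.
    by move: tX; rewrite !inE => /andP[/andP[/forallP Aj _] _].
  apply/eqP; apply: etrans (proj1 (restr t tX)).
  by apply: eq_bigr => j _; rewrite fE.
move=> t1 t2 t1X t2X f12; apply/ffunP => k.
have [j ->|->] := unliftP i k.
  by apply/val_inj; rewrite /= -(fE t1 t1X) -(fE t2 t2X) f12.
by move: t1X t2X; rewrite !inE => /andP[_ /eqP ->] /andP[_ /eqP ->].
Qed.

Lemma card_sols1_le1 (A : pred nat) (c : 'I_1 -> nat) n :
  0 < c ord0 -> #|sols A c n| <= 1.
Proof.
move=> cpos; apply/card_le1_eqP => t1 t2; rewrite !inE !big_ord1.
move=> /andP[_ /eqP e1] /andP[_ /eqP e2]; apply/ffunP => i; rewrite (ord1 i).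
by apply/val_inj/eqP; rewrite /= -(eqn_pmul2l cpos) e1 e2.
Qed.

Lemma sols_ext (A : pred nat) l (c1 c2 : 'I_l -> nat) n :
  c1 =1 c2 -> sols A c1 n = sols A c2 n.
Proof.
move=> c12; apply/setP => t; rewrite !inE; congr (_ && (_ == _)).
by apply: eq_bigr => i _; rewrite c12.
Qed.

Lemma incr_choice_lift h l (s : {ffun 'I_l.+1 -> 'I_h}) (i : 'I_l.+1) :
  incr_choice s -> incr_choice [ffun j : 'I_l => s (lift i j)].
Proof.
move=> /forallP incr; apply/forallP => j1; apply/forallP => j2; apply/implyP => lt12.
rewrite !ffunE; move/forallP: (incr (lift i j1)) => /(_ (lift i j2)) /implyP; apply.
by rewrite /= ltnNge leq_bump2 -ltnNge.
Qed.

Lemma leq_bigmax_ord_widen (f : nat -> nat) m n : m <= n ->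
  \max_(k < m.+1) f k <= \max_(k < n.+1) f k.
Proof.
move=> le_mn; apply/bigmax_leqP => k _.
exact: (@leq_bigmax _ (fun k : 'I_n.+1 => f k) (widen_ord (le_mn : m < n.+1) k)).
Qed.

Lemma leq_prod_factor h b A l m n : m <= n ->
  prod_factor h b A l m <= prod_factor h b A l n.
Proof. by move=> le_mn; apply: leq_prod => j _; apply: leq_bigmax_ord_widen. Qed.

Lemma hat_le_bigmax_rstar_hat h (b : nat -> nat) A l (s : {ffun 'I_l -> 'I_h}) n :
  incr_choice s ->
  hat (sols A (fun i => b (s i)) n) <= \max_(k < n.+1) rstar_hat h b A l k.
Proof.
move=> incr.
apply: leq_trans (@leq_bigmax _ (fun k : 'I_n.+1 => rstar_hat h b A l k) ord_max).
exact: (leq_bigmax_cond s).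
Qed.

Section Bounds.
Variables (h : nat) (b : nat -> nat) (A : pred nat).
Hypothesis b_gt0 : forall i, i < h -> 0 < b i.

Lemma card_subset_sols_le l : l.+1 <= h ->
  (forall n (s : {ffun 'I_l -> 'I_h}), incr_choice s ->
     #|sols A (fun i => b (s i)) n| <= (h * h) ^ l * prod_factor h b A l.+1 n) ->
  forall n (s : {ffun 'I_l.+1 -> 'I_h}) (c : 'I_l.+1 -> nat) (S : {set tup l.+1 n}),
    incr_choice s -> c =1 (fun i => b (s i)) -> S \subset sols A c n ->
    #|S| <= (h * h) ^ l.+1 * hat S * prod_factor h b A l.+1 n.
Proof.
move=> lh IH n s c S incr cE SA.
have c_gt0 i : 0 < c i by rewrite cE b_gt0.
set B := (h * h) ^ l * prod_factor h b A l.+1 n.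
have fibreB i x : #|[set t in S | t i == x]| <= B.
  apply: leq_trans (_ : #|[set t in sols A c n | t i == x]| <= _).
    apply/subset_leq_card/subsetP => t; rewrite inE => /andP[tS tx].
    by rewrite inE (subsetP SA t tS).
  apply: leq_trans (card_sols_fibre_le A i x c_gt0) _.
  rewrite (sols_ext A (c2 := fun j => b ([ffun j : 'I_l => s (lift i j)] j))); last first.
    by move=> j; rewrite ffunE cE.
  apply: leq_trans (IH _ _ (incr_choice_lift i incr)) _.
  by rewrite leq_mul2l leq_prod_factor ?orbT ?leq_subr.
apply: leq_trans (card_le_hat_fibres fibreB) _.
have ll_hh : l.+1 * l.+1 <= h * h by apply: leq_mul.
rewrite /B expnS; move: (hat S) (prod_factor _ _ _ _ _) ((h * h) ^ l) => a p k; nia.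
Qed.

Lemma card_sols_incr_le l : l.+1 <= h ->
  forall n (s : {ffun 'I_l.+1 -> 'I_h}), incr_choice s ->
    #|sols A (fun i => b (s i)) n| <= (h * h) ^ l.+1 * prod_factor h b A l.+2 n.
Proof.
elim: l => [|l IH] lh n s incr.
  rewrite /prod_factor big_geq // muln1 expn1.
  apply: leq_trans (card_sols1_le1 _ _ (b_gt0 (ltn_ord _))) _.
  by rewrite muln_gt0 andbb.
apply: leq_trans (card_subset_sols_le lh (IH (ltnW lh)) incr (frefl _) (subxx _)) _.
rewrite /prod_factor (big_nat_recr _ _ _ (_ : 2 <= l.+2)) //= -mulnA leq_mul2l.
by rewrite mulnC leq_mul2l hat_le_bigmax_rstar_hat ?orbT.
Qed.

End Bounds.

Theorem mainTheorem9 (h : nat) (b : nat -> nat)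
  (Hh : (2 <= h)%N)
  (Hb : forall i, (i < h)%N -> (0 < b i)%N)
  (Hgcd : \big[gcdn/0%N]_(i < h) b i = 1%N) :
  exists C : nat,
    forall (R : realType) (delta : R) (A : pred nat) (l n : nat),
      (0 < delta)%R -> (delta < 1)%R -> (2 <= l)%N -> (l <= h)%N ->
      [/\ (r_fun b A l n <= C * r_hat b A l n * prod_factor h b A l n)%N,
          (rstar h b A l n <= C * rstar_hat h b A l n * prod_factor h b A l n)%N,
          (rho_fun b A l n <= C * rho_hat b A l n * prod_factor h b A l n)%N
        & (rho_small delta b A l n <= C * rho_small_hat delta b A l n * prod_factor h b A l n)%N].
Proof.
exists ((h * h) ^ h) => R delta A [|[|l]] n // _ _ _ lh.
have bound := card_subset_sols_le (A := A) Hb lh (card_sols_incr_le A Hb (ltnW lh)).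
have raise a p : (h * h) ^ l.+2 * a * p <= (h * h) ^ h * a * p.
  by rewrite !leq_mul // leq_pexp2l // muln_gt0 andbb (ltnW Hh).
pose c := fun i : 'I_l.+2 => b i.
pose s0 := [ffun i : 'I_l.+2 => widen_ord lh i].
have incr0 : incr_choice s0.
  by apply/forallP => i; apply/forallP => j; apply/implyP; rewrite !ffunE.
have b_s0 : c =1 (fun i => b (s0 i)) by move=> i; rewrite ffunE.
have exact_sub : exact_sols A c n \subset sols A c n.
  by apply/subsetP => t; rewrite inE => /andP[].
have small_sub : small_sols delta A c n \subset sols A c n.
  by apply: subset_trans exact_sub; apply/subsetP => t; rewrite inE => /andP[].
split.
- by apply: leq_trans (raise _ _); apply: bound incr0 b_s0 (subxx _).
- apply/bigmax_leqP => s incr; apply: leq_trans (raise _ _).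
  apply: leq_trans (bound _ _ _ _ incr (frefl _) (subxx _)) _.
  by rewrite leq_mul2r leq_mul2l (leq_bigmax_cond s) ?orbT.
- by apply: leq_trans (raise _ _); apply: bound incr0 b_s0 exact_sub.
- by apply: leq_trans (raise _ _); apply: bound incr0 b_s0 small_sub.
Qed.
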